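(* Under the hypotheses of the following setting: $f:\mathbb{R}\to(0,+\infty)$ Lipschitz continuous and continuously differentiable with $f>0$, $f'\le0$, $\lim_{x\to+\infty}f(x)=0$; $r>0$; $A:(-\infty,r)\to\mathbb{R}$ continuous; and $\tau:[0,r)\to[0,\infty)$ a $C^1$ solution of $\tau'(t)=1-\frac{f(A(t))}{f(A(t-\tau(t)))}$ for $t\in[0,r)$ with $\tau(0)=\tau_0\ge0$. Then: if $\tau_0>0$, then $\tau(t)>0$ for all $t\in[0,r)$; and if $\tau_0=0$, then $\tau(t)=0$ for all $t\in[0,r)$. *)

From Stdlib Require Import Reals.
Open Scope R_scope.

(* One-sided-aware derivative of g at x relative to a domain D
   (used on D = [0,r), giving the right derivative at 0). *)
Definition derivable_within_lim (D : R -> Prop) (g : R -> R) (x l : R) : Prop :=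
  forall eps : R, eps > 0 -> exists delta : R, delta > 0 /\
    forall h : R, h <> 0 -> Rabs h < delta -> D (x + h) ->
      Rabs ((g (x + h) - g x) / h - l) < eps.

Definition Lipschitz (f : R -> R) : Prop :=
  exists L : R, forall x y : R, Rabs (f x - f y) <= L * Rabs (x - y).

Definition tends_to_zero_at_pinf (f : R -> R) : Prop :=
  forall eps : R, eps > 0 -> exists M : R, forall x : R, x > M -> Rabs (f x) < eps.

(* Let g := f o A, which is positive and continuous on (-oo, r), and let Phi be
   a primitive of g.  Along a solution, t |-> Phi t - Phi (t - tau t) has
   derivative g t - (1 - tau' t) g (t - tau t), which the delay equation makes
   vanish; so this quantity is constant on [0, r).  As Phi is strictly
   increasing, it is positive exactly when tau t > 0, so the sign of tau t is
   that of tau 0. *)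

From Stdlib Require Import Reals Lra.
From Coquelicot Require Import Coquelicot.
Open Scope R_scope.

Definition continuous_within (D : R -> Prop) (g : R -> R) (x : R) : Prop :=
  forall eps : R, eps > 0 -> exists delta : R, delta > 0 /\
    forall y : R, D y -> Rabs (y - x) < delta -> Rabs (g y - g x) < eps.

Lemma continuous_within_of_pt (D : R -> Prop) (g : R -> R) (x : R) :
  continuity_pt g x -> continuous_within D g x.
Proof.
  intros Hg eps Heps.
  destruct (Hg eps Heps) as [d [Hd Hclose]].
  exists d; split; [exact Hd|].
  intros y _ Hy.
  destruct (Req_dec y x) as [->|Hne].
  - rewrite Rminus_eq_0, Rabs_R0; lra.
  - exact (Hclose y (conj (conj I (not_eq_sym Hne)) Hy)).
Qed.

Lemma continuous_within_minus (D : R -> Prop) (g1 g2 : R -> R) (x : R) :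
  continuous_within D g1 x -> continuous_within D g2 x ->
  continuous_within D (fun y => g1 y - g2 y) x.
Proof.
  intros H1 H2 eps Heps.
  destruct (H1 (eps / 2) ltac:(lra)) as [d1 [Hd1 C1]].
  destruct (H2 (eps / 2) ltac:(lra)) as [d2 [Hd2 C2]].
  exists (Rmin d1 d2); split; [now apply Rmin_pos|].
  intros y Dy Hy.
  pose proof (C1 y Dy (Rlt_le_trans _ _ _ Hy (Rmin_l _ _))) as E1.
  pose proof (C2 y Dy (Rlt_le_trans _ _ _ Hy (Rmin_r _ _))) as E2.
  apply Rabs_def2 in E1. apply Rabs_def2 in E2. apply Rabs_def1; lra.
Qed.

Lemma continuous_within_comp (D : R -> Prop) (F g : R -> R) (x : R) :
  continuous_within D g x -> continuity_pt F (g x) ->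
  continuous_within D (fun y => F (g y)) x.
Proof.
  intros Hg HF eps Heps.
  destruct (continuous_within_of_pt (fun _ => True) F (g x) HF eps Heps)
    as [d [Hd CF]].
  destruct (Hg d Hd) as [d' [Hd' Cg]].
  exists d'; split; [exact Hd'|].
  intros y Dy Hy. exact (CF (g y) I (Cg y Dy Hy)).
Qed.

Lemma derivable_within_lim_continuous_within (D : R -> Prop) (g : R -> R) (x l : R) :
  derivable_within_lim D g x l -> continuous_within D g x.
Proof.
  intros Hder eps Heps.
  destruct (Hder 1 Rlt_0_1) as [d [Hd Hquot]].
  set (K := Rabs l + 1).
  assert (HK : 0 < K) by (pose proof (Rabs_pos l); unfold K; lra).
  exists (Rmin d (eps / K)); split.
  { apply Rmin_pos; [lra|]. now apply Rdiv_lt_0_compat. }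
  intros y Dy Hy.
  destruct (Req_dec y x) as [->|Hne].
  { rewrite Rminus_eq_0, Rabs_R0; lra. }
  set (h := y - x).
  assert (Hh : h <> 0) by (unfold h; lra).
  assert (Hhd : Rabs h < d) by exact (Rlt_le_trans _ _ _ Hy (Rmin_l _ _)).
  assert (HhK : Rabs h * K < eps).
  { pose proof (Rmult_lt_compat_r K _ _ HK (Rlt_le_trans _ _ _ Hy (Rmin_r _ _))) as E.
    replace (eps / K * K) with eps in E by (field; lra). exact E. }
  assert (Hxh : x + h = y) by (unfold h; ring).
  pose proof (Hquot h Hh Hhd ltac:(now rewrite Hxh)) as Hq.
  rewrite Hxh in Hq.
  assert (Hbound : Rabs ((g y - g x) / h) < K).
  { pose proof (Rabs_triang_inv ((g y - g x) / h) l). unfold K. lra. }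
  replace (g y - g x) with (h * ((g y - g x) / h)) by (field; exact Hh).
  rewrite Rabs_mult.
  apply Rle_lt_trans with (Rabs h * K); [|exact HhK].
  apply Rmult_le_compat_l; [apply Rabs_pos | lra].
Qed.

Lemma is_derive_of_derivable_within_lim (D : R -> Prop) (g : R -> R) (x l d : R) :
  d > 0 -> (forall y, Rabs (y - x) < d -> D y) ->
  derivable_within_lim D g x l -> is_derive g x l.
Proof.
  intros Hd HD Hder. apply is_derive_Reals. intros eps Heps.
  destruct (Hder eps Heps) as [d' [Hd' Hquot]].
  exists (mkposreal _ (Rmin_pos _ _ Hd Hd')). intros h Hh Hhd. simpl in Hhd.
  apply Hquot; [exact Hh | exact (Rlt_le_trans _ _ _ Hhd (Rmin_r _ _))|].
  apply HD. replace (x + h - x) with h by ring.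
  exact (Rlt_le_trans _ _ _ Hhd (Rmin_l _ _)).
Qed.

Lemma is_derive_zero_const (h : R -> R) (a b : R) :
  (forall t, a < t < b -> is_derive h t 0) ->
  forall s t, a < s < b -> a < t < b -> h s = h t.
Proof.
  intros Hder s t Hs Ht.
  destruct (MVT_gen h s t (fun _ => 0)) as [c [_ Hc]].
  - intros x [Hx1 Hx2]. apply Hder. split.
    + apply Rle_lt_trans with (2 := Hx1). apply Rmin_glb; lra.
    + apply Rlt_le_trans with (1 := Hx2). apply Rmax_lub; lra.
  - intros x [Hx1 Hx2].
    apply continuity_pt_filterlim, (ex_derive_continuous (V := R_NormedModule)).
    exists 0. apply Hder. split.
    + apply Rlt_le_trans with (2 := Hx1). apply Rmin_glb_lt; lra.
    + apply Rle_lt_trans with (1 := Hx2). apply Rmax_lub_lt; lra.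
  - simpl in Hc. lra.
Qed.

Lemma is_derive_zero_const_right_closed (h : R -> R) (a b : R) :
  (forall t, a < t < b -> is_derive h t 0) ->
  continuous_within (fun s => a <= s < b) h a ->
  forall t, a <= t < b -> h t = h a.
Proof.
  intros Hder Hcont t Ht.
  destruct (Req_dec t a) as [->|Hne]; [reflexivity|].
  apply Rminus_diag_uniq.
  destruct (Req_dec (h t - h a) 0) as [|Hneq]; [assumption|exfalso].
  destruct (Hcont (Rabs (h t - h a)) (Rabs_pos_lt _ Hneq)) as [d [Hd Hclose]].
  set (s := a + Rmin (t - a) (d / 2)).
  assert (Hs : 0 < Rmin (t - a) (d / 2)) by (apply Rmin_pos; lra).
  pose proof (Rmin_l (t - a) (d / 2)). pose proof (Rmin_r (t - a) (d / 2)).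
  assert (Hsa : Rabs (s - a) < d) by (unfold s; rewrite Rabs_pos_eq; lra).
  pose proof (Hclose s ltac:(unfold s; lra) Hsa) as Hhs.
  rewrite (is_derive_zero_const h a b Hder s t) in Hhs by (unfold s; lra).
  lra.
Qed.

Section Primitive.

Variables (g : R -> R) (r : R).
Hypothesis g_cont : forall z, z < r -> continuity_pt g z.

Lemma is_derive_RInt_lt (a x : R) :
  a < r -> x < r -> is_derive (fun y => RInt g a y) x (g x).
Proof.
  intros Ha Hx.
  apply is_derive_RInt with (a := a).
  - assert (Hrad : 0 < (r - x) / 2) by lra.
    exists (mkposreal _ Hrad). intros y Hy.
    change (Rabs (y - x) < (r - x) / 2) in Hy. apply Rabs_def2 in Hy.
    apply RInt_correct, ex_RInt_continuous. intros z [_ Hz].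
    apply continuity_pt_filterlim, g_cont.
    apply Rle_lt_trans with (1 := Hz). apply Rmax_lub_lt; lra.
  - now apply continuity_pt_filterlim, g_cont.
Qed.

Lemma continuity_pt_RInt_lt (a x : R) :
  a < r -> x < r -> continuity_pt (fun y => RInt g a y) x.
Proof.
  intros Ha Hx.
  apply continuity_pt_filterlim, (ex_derive_continuous (V := R_NormedModule)).
  exists (g x). now apply is_derive_RInt_lt.
Qed.

Hypothesis g_pos : forall z, z < r -> 0 < g z.

Lemma RInt_lt_increasing (a x y : R) :
  a < r -> x < y -> y < r -> RInt g a x < RInt g a y.
Proof.
  intros Ha Hxy Hy.
  destruct (MVT_gen (fun z => RInt g a z) x y g) as [c [[Hc1 Hc2] Hc]].
  - intros z [_ Hz]. rewrite Rmax_right in Hz by lra.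
    apply is_derive_RInt_lt; lra.
  - intros z [_ Hz]. rewrite Rmax_right in Hz by lra.
    apply continuity_pt_RInt_lt; lra.
  - rewrite Rmin_left, Rmax_right in * by lra. simpl in Hc.
    pose proof (g_pos c ltac:(lra)). nra.
Qed.

End Primitive.

Section Delay_equation.

Variables (g : R -> R) (r : R) (tau tau' : R -> R).
Hypothesis r_pos : 0 < r.
Hypothesis g_cont : forall z, z < r -> continuity_pt g z.
Hypothesis g_pos : forall z, z < r -> 0 < g z.
Hypothesis tau_nonneg : forall t, 0 <= t < r -> 0 <= tau t.
Hypothesis tau_derivable :
  forall t, 0 <= t < r -> derivable_within_lim (fun s => 0 <= s < r) tau t (tau' t).
Hypothesis tau_delay : forall t, 0 <= t < r -> tau' t = 1 - g t / g (t - tau t).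

Lemma delay_invariant (t : R) : 0 <= t < r ->
  RInt g 0 t - RInt g 0 (t - tau t) = RInt g 0 0 - RInt g 0 (0 - tau 0).
Proof.
  set (Phi := fun y => RInt g 0 y).
  assert (Hlag : forall s, 0 <= s < r -> s - tau s < r)
    by (intros s Hs; pose proof (tau_nonneg s Hs); lra).
  apply (is_derive_zero_const_right_closed
           (fun s => Phi s - Phi (s - tau s)) 0 r).
  - intros s Hs.
    assert (Dtau : is_derive tau s (tau' s)).
    { apply (is_derive_of_derivable_within_lim (fun y => 0 <= y < r) _ _ _ (Rmin s (r - s)));
        [apply Rmin_pos; lra| |apply tau_derivable; lra].
      intros y Hy. pose proof (Rmin_l s (r - s)). pose proof (Rmin_r s (r - s)).
      apply Rabs_def2 in Hy. lra. }
    assert (Dlag : is_derive (fun y => y - tau y) s (1 - tau' s))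
      by exact (is_derive_minus _ _ _ _ _ (is_derive_id s) Dtau).
    pose proof (is_derive_minus _ _ _ _ _
                  (is_derive_RInt_lt g r g_cont 0 s r_pos ltac:(lra))
                  (is_derive_comp Phi _ s _ _
                     (is_derive_RInt_lt g r g_cont 0 _ r_pos (Hlag s ltac:(lra))) Dlag))
      as D.
    replace 0 with (minus (g s) (scal (1 - tau' s) (g (s - tau s)))); [exact D|].
    rewrite tau_delay by lra.
    unfold minus, plus, opp, scal; simpl; unfold mult; simpl.
    field. apply Rgt_not_eq, g_pos, Hlag; lra.
  - apply continuous_within_minus.
    + apply continuous_within_of_pt, (continuity_pt_RInt_lt g r g_cont); lra.
    + apply (continuous_within_comp _ Phi (fun y => y - tau y)).
      * apply continuous_within_minus; [now apply continuous_within_of_pt, continuity_pt_id|].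
        apply (derivable_within_lim_continuous_within _ _ _ (tau' 0)), tau_derivable; lra.
      * apply (continuity_pt_RInt_lt g r g_cont); [lra|apply Hlag; lra].
Qed.

Lemma delay_pos_iff (t : R) : 0 <= t < r ->
  0 < tau t <-> RInt g 0 (t - tau t) < RInt g 0 t.
Proof.
  intros Ht. pose proof (tau_nonneg t Ht) as Hnn. split.
  - intros Hpos. apply (RInt_lt_increasing g r g_cont g_pos); lra.
  - intros Hlt. destruct (Rle_lt_or_eq_dec 0 (tau t) Hnn) as [|Hz]; [assumption|].
    rewrite <- Hz, Rminus_0_r in Hlt. lra.
Qed.

End Delay_equation.

Theorem mainTheorem3
  (f f' : R -> R) (r : R) (A tau : R -> R) (tau0 : R)
  (Hfpos : forall x, 0 < f x)
  (Hflip : Lipschitz f)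
  (Hfder : forall x, derivable_pt_lim f x (f' x))
  (Hf'cont : continuity f')
  (Hf'neg : forall x, f' x <= 0)
  (Hflim : tends_to_zero_at_pinf f)
  (Hr : 0 < r)
  (HA : forall x, x < r -> continuity_pt A x)
  (Htau_nonneg : forall t, 0 <= t < r -> 0 <= tau t)
  (Htau_C1 : exists tau' : R -> R,
      (forall t, 0 <= t < r ->
         derivable_within_lim (fun s => 0 <= s < r) tau t (tau' t)) /\
      (forall t, 0 <= t < r ->
         forall eps, eps > 0 -> exists delta, delta > 0 /\
           forall s, 0 <= s < r -> Rabs (s - t) < delta ->
             Rabs (tau' s - tau' t) < eps) /\
      (forall t, 0 <= t < r ->
         tau' t = 1 - f (A t) / f (A (t - tau t))))
  (Htau0 : tau 0 = tau0) (Htau0_nonneg : 0 <= tau0) :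
  (tau0 > 0 -> forall t, 0 <= t < r -> tau t > 0) /\
  (tau0 = 0 -> forall t, 0 <= t < r -> tau t = 0).
Proof.
  destruct Htau_C1 as [tau' [Hder [_ Hdelay]]].
  set (g := fun s => f (A s)).
  assert (g_cont : forall z, z < r -> continuity_pt g z).
  { intros z Hz. apply continuity_pt_comp; [now apply HA|].
    apply derivable_continuous_pt. exists (f' (A z)). apply Hfder. }
  assert (g_pos : forall z, z < r -> 0 < g z) by (intros; apply Hfpos).
  assert (Hr0 : 0 <= 0 < r) by lra.
  pose proof (delay_invariant g r tau tau' Hr g_cont g_pos Htau_nonneg Hder Hdelay)
    as Hinv.
  pose proof (delay_pos_iff g r tau Hr g_cont g_pos Htau_nonneg) as Hsign.
  split.
  - intros Hpos t Ht.
    apply Hsign; [exact Ht|]. apply Rminus_gt_0_lt. rewrite Hinv by exact Ht.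
    apply Rgt_minus, Hsign; [exact Hr0|]. now rewrite Htau0.
  - intros Hzero t Ht.
    destruct (Rle_lt_or_eq_dec 0 (tau t) (Htau_nonneg t Ht)) as [Hpos|]; [exfalso|congruence].
    apply Hsign in Hpos; [|exact Ht].
    pose proof (Hinv t Ht) as Ht0. rewrite Htau0, Hzero, !Rminus_0_r in Ht0. lra.
Qed.
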